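(* Let $m\ge1$, let $k_1,k_2\ge0$ be integers and $r_1,r_2>0$ with $r_1^2+r_2^2=1$. Let $F_1:\mathbb{R}^{m+1}\to\mathbb{R}^{n_1+1}$ and $F_2:\mathbb{R}^{m+1}\to\mathbb{R}^{n_2+1}$ be forms of degrees $k_1$, $k_2$ (all components homogeneous polynomials of that degree) with $|F_1(\bar x)|^2=r_1^2|\bar x|^{2k_1}$ and $|F_2(\bar x)|^2=r_2^2|\bar x|^{2k_2}$ for all $\bar x$, restricting to $\varphi_1:\mathbb{S}^m\to\mathbb{S}^{n_1}(r_1)$, $\varphi_2:\mathbb{S}^m\to\mathbb{S}^{n_2}(r_2)$. Let $F=(F_1,F_2):\mathbb{R}^{m+1}\to\mathbb{R}^{n_1+n_2+2}$, $\Phi=(\Phi_1,\Phi_2)$ its restriction to $\mathbb{S}^m$, and $\varphi=\iota\circ(\varphi_1,\varphi_2):\mathbb{S}^m\to\mathbb{S}^{n_1+n_2+1}$, where $\iota$ is the canonical inclusion of $\mathbb{S}^{n_1}(r_1)\times\mathbb{S}^{n_2}(r_2)$ into $\mathbb{S}^{n_1+n_2+1}$. Then, at every point of $\mathbb{S}^m$, $$\tau(\varphi)=-\Delta^0F+\Big(\big(|d^0F|^2-k_1^2r_1^2-k_2^2r_2^2+k_1(1-m-k_1)\big)\Phi_1,\ \big(|d^0F|^2-k_1^2r_1^2-k_2^2r_2^2+k_2(1-m-k_2)\big)\Phi_2\Big).$$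
   Context: $\mathbb{S}^m$ is the unit sphere in $\mathbb{R}^{m+1}$, $\mathbb{S}^n(r)$ the sphere of radius $r$ centred at $0$. The tension field $\tau(\varphi)=\operatorname{trace}\nabla d\varphi$ is regarded as an $\mathbb{R}^{n_1+n_2+2}$-valued function on $\mathbb{S}^m$ via the inclusion $\mathbb{S}^{n_1+n_2+1}\subset\mathbb{R}^{n_1+n_2+2}$. Operators on $\mathbb{R}^{m+1}$ (evaluated at points of $\mathbb{S}^m$): $\Delta^0F=-\sum_i\partial^2F/\partial(x^i)^2$ componentwise; $|d^0F|^2=\sum_{i=1}^{m+1}|\partial F/\partial x^i|^2$. *)

From Stdlib Require Import Reals Lra Lia List Arith.
From Coquelicot Require Import Coquelicot.
Open Scope R_scope.

(* Points of R^{n+1} are functions nat -> R whose coordinates 0..n are used. *)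

Fixpoint sumR (n : nat) (f : nat -> R) : R :=
  match n with O => 0 | S p => sumR p f + f p end.

Fixpoint prodR (n : nat) (f : nat -> R) : R :=
  match n with O => 1 | S p => prodR p f * f p end.

Fixpoint sumN (n : nat) (f : nat -> nat) : nat :=
  match n with O => O | S p => (sumN p f + f p)%nat end.

Definition dotR (n : nat) (u v : nat -> R) : R := sumR (S n) (fun i => u i * v i).
Definition nsq (n : nat) (u : nat -> R) : R := dotR n u u.

Definition monomial (m : nat) (alpha : nat -> nat) (x : nat -> R) : R :=
  prodR (S m) (fun i => x i ^ alpha i).

Definition is_form (m k : nat) (f : (nat -> R) -> R) : Prop :=
  exists l : list (R * (nat -> nat)),
    List.Forall (fun p : R * (nat -> nat) => sumN (S m) (Datatypes.snd p) = k) l /\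
    forall x, f x = fold_right (fun (p : R * (nat -> nat)) (acc : R) => Datatypes.fst p * monomial m (Datatypes.snd p) x + acc) 0 l.

(* F = (F1, F2) : R^{m+1} -> R^{n1+1} x R^{n2+1} = R^{n1+n2+2} *)
Definition concat_map (n1 : nat) (F1 F2 : (nat -> R) -> nat -> R)
  : (nat -> R) -> nat -> R :=
  fun x j => if (j <=? n1)%nat then F1 x j else F2 x (j - S n1)%nat.

Definition std_basis (i : nat) : nat -> R := fun l => if Nat.eqb l i then 1 else 0.

Definition partial (F : (nat -> R) -> nat -> R) (i j : nat) (x : nat -> R) : R :=
  Derive (fun t => F (fun l => x l + t * std_basis i l) j) 0.

Definition lap0 (m : nat) (F : (nat -> R) -> nat -> R) (x : nat -> R) (j : nat) : R :=
  - sumR (S m) (fun i => Derive_n (fun t => F (fun l => x l + t * std_basis i l) j) 2 0).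

Definition d0sq (m N : nat) (F : (nat -> R) -> nat -> R) (x : nat -> R) : R :=
  sumR (S m) (fun i => sumR (S N) (fun j => (partial F i j x) ^ 2)).

Definition tangent_frame (m : nat) (x : nat -> R) (e : nat -> nat -> R) : Prop :=
  (forall a, (a < m)%nat -> dotR m (e a) x = 0) /\
  (forall a b, (a < m)%nat -> (b < m)%nat ->
     dotR m (e a) (e b) = if Nat.eqb a b then 1 else 0).

Definition geod (x v : nat -> R) (t : R) : nat -> R :=
  fun l => cos t * x l + sin t * v l.

(* Tension field tau(phi) = trace nabla d phi at x, computed in the orthonormal
   frame e of T_x S^m, for the map phi = F|_{S^m} : S^m -> S^N (unit sphere of
   R^{N+1}), as an R^{N+1}-valued vector:
   nabla d phi (e_a, e_a) is the tangential (to S^N at phi(x)) part of the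
   ambient acceleration of the curve phi o gamma_a at t = 0, gamma_a being the
   geodesic with gamma_a(0) = x, gamma_a'(0) = e_a. *)
Definition tension (m N : nat) (F : (nat -> R) -> nat -> R) (x : nat -> R)
  (e : nat -> nat -> R) : nat -> R :=
  let A := fun j => sumR m (fun a => Derive_n (fun t => F (geod x (e a) t) j) 2 0) in
  let P := F x in
  fun j => A j - (dotR N A P / nsq N P) * P j.

From Stdlib Require Import Reals Lra Lia FunctionalExtensionality.
From mathcomp Require all_boot all_algebra Rstruct.
From Coquelicot Require Import Coquelicot.
Open Scope R_scope.

(* Let l_k = k (k + m - 1).  If f is a form of degree k with Hessian H, Euler's
   relation gives (f o g)''(0) = H(v, v) - k f(x) along the geodesic
   g(t) = cos t x + sin t v of S^m.  Summing over an orthonormal frame of T_x S^m,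
   which x completes to an orthonormal basis of R^{m+1}, and using
   H(x, x) = k (k - 1) f(x), the ambient acceleration of phi is
   -Delta^0 F_j - l_{k_j} F_j in each component.  The tension field is its part
   tangent to the target sphere at F(x), so it only remains to compute
   <Delta^0 F, F>: differentiating |F|^2 = r1^2 |y|^(2 k1) + r2^2 |y|^(2 k2) twice
   along each coordinate line and summing gives
   <Delta^0 F, F> = |d^0 F|^2 - r1^2 k1 (2 k1 + m - 1) - r2^2 k2 (2 k2 + m - 1). *)

(** * Finite sums *)

Lemma sumR_ext (n : nat) (f g : nat -> R) :
  (forall i, (i < n)%nat -> f i = g i) -> sumR n f = sumR n g.
Proof.
  induction n as [|n IH]; intros H; simpl; [reflexivity|].
  rewrite IH, H by (lia || (intros; apply H; lia)). reflexivity.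
Qed.

Lemma sumR_plus (n : nat) (f g : nat -> R) :
  sumR n (fun i => f i + g i) = sumR n f + sumR n g.
Proof. induction n as [|n IH]; simpl; [ring|]. rewrite IH. ring. Qed.

Lemma sumR_opp (n : nat) (f : nat -> R) : sumR n (fun i => - f i) = - sumR n f.
Proof. induction n as [|n IH]; simpl; [ring|]. rewrite IH. ring. Qed.

Lemma sumR_scal_l (n : nat) (a : R) (f : nat -> R) :
  sumR n (fun i => a * f i) = a * sumR n f.
Proof. induction n as [|n IH]; simpl; [ring|]. rewrite IH. ring. Qed.

Lemma sumR_scal_r (n : nat) (a : R) (f : nat -> R) :
  sumR n (fun i => f i * a) = sumR n f * a.
Proof. induction n as [|n IH]; simpl; [ring|]. rewrite IH. ring. Qed.

Lemma sumR_const (n : nat) (c : R) : sumR n (fun _ => c) = INR n * c.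
Proof. induction n as [|n IH]; simpl sumR; [simpl; ring|]. rewrite IH, S_INR. ring. Qed.

Lemma sumR_single (n l : nat) (f : nat -> R) : (l < n)%nat ->
  (forall i, (i < n)%nat -> i <> l -> f i = 0) -> sumR n f = f l.
Proof.
  induction n as [|n IH]; intros Hl H; [lia|]. simpl.
  destruct (Nat.eq_dec l n) as [->|Hne].
  - rewrite (sumR_ext n f (fun _ => 0)), sumR_const by (intros; apply H; lia). ring.
  - rewrite IH, (H n) by (try lia; intros; apply H; lia). ring.
Qed.

Lemma sumR_swap (n p : nat) (f : nat -> nat -> R) :
  sumR n (fun a => sumR p (fun i => f a i)) = sumR p (fun i => sumR n (fun a => f a i)).
Proof.
  induction n as [|n IH]; simpl.
  - rewrite sumR_const. ring.
  - rewrite IH, <- sumR_plus. reflexivity.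
Qed.

Lemma sumR_add_range (a b : nat) (f : nat -> R) :
  sumR (a + b) f = sumR a f + sumR b (fun j => f (a + j)%nat).
Proof.
  induction b as [|b IH]; simpl; [rewrite Nat.add_0_r; ring|].
  rewrite Nat.add_succ_r. simpl. rewrite IH. ring.
Qed.

Lemma std_basis_neq (i l : nat) : l <> i -> std_basis i l = 0.
Proof. intros H. unfold std_basis. rewrite (proj2 (Nat.eqb_neq l i) H). reflexivity. Qed.

Lemma std_basis_diag (i : nat) : std_basis i i = 1.
Proof. unfold std_basis. rewrite Nat.eqb_refl. reflexivity. Qed.

Lemma sumR_std_basis (n i : nat) (f : nat -> R) : (i < n)%nat ->
  sumR n (fun l => f l * std_basis i l) = f i.
Proof.
  intros Hi.
  rewrite (sumR_single n i) by (auto; intros l _ Hl; rewrite std_basis_neq by auto; ring).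
  rewrite std_basis_diag. ring.
Qed.

(** * Derivatives of polynomial functions *)

Lemma is_derive_eq (f : R -> R) (x a b : R) : is_derive f x a -> a = b -> is_derive f x b.
Proof. intros H <-. exact H. Qed.

Lemma is_derive_Rconst (a x : R) : is_derive (fun _ => a) x 0.
Proof. apply (is_derive_const a x). Qed.

Lemma is_derive_Rplus (f g : R -> R) (x df dg : R) :
  is_derive f x df -> is_derive g x dg -> is_derive (fun t => f t + g t) x (df + dg).
Proof. apply (is_derive_plus f g). Qed.

Lemma is_derive_Rmult (f g : R -> R) (x df dg : R) :
  is_derive f x df -> is_derive g x dg ->
  is_derive (fun t => f t * g t) x (df * g x + f x * dg).
Proof. intros Hf Hg. apply (is_derive_mult f g x df dg Hf Hg Rmult_comm). Qed.

Lemma is_derive_sumR (n : nat) (phi : nat -> R -> R) (dphi : nat -> R) (x : R) :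
  (forall i, (i < n)%nat -> is_derive (phi i) x (dphi i)) ->
  is_derive (fun t => sumR n (fun i => phi i t)) x (sumR n dphi).
Proof.
  induction n as [|n IH]; intros H; simpl.
  - apply is_derive_Rconst.
  - apply is_derive_Rplus; [apply IH; intros; apply H|apply H]; lia.
Qed.

(* Gradients and Hessians are characterised only through the chain rule along
   differentiable curves; this is all the multivariable calculus needed, and it
   is closed under sums and products, so every form has them. *)
Definition has_grad (m : nat) (f : (nat -> R) -> R) (g : nat -> (nat -> R) -> R) : Prop :=
  forall (c : R -> nat -> R) (dc : nat -> R) (t : R),
    (forall l, (l <= m)%nat -> is_derive (fun s => c s l) t (dc l)) ->
    is_derive (fun s => f (c s)) t (sumR (S m) (fun i => g i (c t) * dc i)).

Definition has_hess (m : nat) (f : (nat -> R) -> R) (g : nat -> (nat -> R) -> R)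
  (H : nat -> nat -> (nat -> R) -> R) : Prop :=
  has_grad m f g /\ forall i, has_grad m (g i) (H i).

Definition ex_hess (m : nat) (f : (nat -> R) -> R) : Prop :=
  exists g H, has_hess m f g H.

Lemma has_grad_const (m : nat) (a : R) : has_grad m (fun _ => a) (fun _ _ => 0).
Proof.
  intros c dc t _. eapply is_derive_eq; [apply is_derive_Rconst|].
  rewrite (sumR_ext _ _ (fun _ => 0)), sumR_const by (intros; ring). ring.
Qed.

Lemma has_grad_coord (m l : nat) : (l <= m)%nat ->
  has_grad m (fun y => y l) (fun i _ => std_basis l i).
Proof.
  intros Hl c dc t Hc. eapply is_derive_eq; [apply (Hc l Hl)|].
  rewrite (sumR_ext _ _ (fun i => dc i * std_basis l i)) by (intros; ring).
  rewrite sumR_std_basis by lia. reflexivity.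
Qed.

Lemma has_grad_plus (m : nat) (f1 f2 : (nat -> R) -> R) (g1 g2 : nat -> (nat -> R) -> R) :
  has_grad m f1 g1 -> has_grad m f2 g2 ->
  has_grad m (fun y => f1 y + f2 y) (fun i y => g1 i y + g2 i y).
Proof.
  intros H1 H2 c dc t Hc. eapply is_derive_eq.
  - apply (is_derive_Rplus (fun s => f1 (c s)) (fun s => f2 (c s))); [apply H1|apply H2]; auto.
  - rewrite <- sumR_plus. apply sumR_ext; intros; ring.
Qed.

Lemma has_grad_mult (m : nat) (f1 f2 : (nat -> R) -> R) (g1 g2 : nat -> (nat -> R) -> R) :
  has_grad m f1 g1 -> has_grad m f2 g2 ->
  has_grad m (fun y => f1 y * f2 y) (fun i y => g1 i y * f2 y + f1 y * g2 i y).
Proof.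
  intros H1 H2 c dc t Hc. eapply is_derive_eq.
  - apply (is_derive_Rmult (fun s => f1 (c s)) (fun s => f2 (c s))); [apply H1|apply H2]; auto.
  - rewrite <- sumR_scal_l, <- sumR_scal_r, <- sumR_plus. apply sumR_ext; intros; ring.
Qed.

Lemma ex_hess_const (m : nat) (a : R) : ex_hess m (fun _ => a).
Proof.
  exists (fun _ _ => 0), (fun _ _ _ => 0).
  split; [|intros]; apply has_grad_const.
Qed.

Lemma ex_hess_coord (m l : nat) : (l <= m)%nat -> ex_hess m (fun y => y l).
Proof.
  intros Hl. exists (fun i _ => std_basis l i), (fun _ _ _ => 0).
  split; [apply has_grad_coord, Hl|intros; apply has_grad_const].
Qed.

Lemma ex_hess_plus (m : nat) (f1 f2 : (nat -> R) -> R) :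
  ex_hess m f1 -> ex_hess m f2 -> ex_hess m (fun y => f1 y + f2 y).
Proof.
  intros (g1 & H1 & A1 & B1) (g2 & H2 & A2 & B2).
  exists (fun i y => g1 i y + g2 i y), (fun i j y => H1 i j y + H2 i j y).
  split; [|intros i]; apply has_grad_plus; auto.
Qed.

Lemma ex_hess_mult (m : nat) (f1 f2 : (nat -> R) -> R) :
  ex_hess m f1 -> ex_hess m f2 -> ex_hess m (fun y => f1 y * f2 y).
Proof.
  intros (g1 & H1 & A1 & B1) (g2 & H2 & A2 & B2). do 2 eexists.
  split; [apply has_grad_mult; eauto|].
  intros i. apply has_grad_plus; apply has_grad_mult; eauto.
Qed.

Lemma ex_hess_ext (m : nat) (f f' : (nat -> R) -> R) :
  (forall y, f y = f' y) -> ex_hess m f -> ex_hess m f'.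
Proof.
  intros E (g & H & A & B). exists g, H. split; auto.
  intros c dc t Hc. eapply is_derive_ext; [intros; apply E|]. apply A, Hc.
Qed.

Lemma ex_hess_coord_pow (m l a : nat) : (l <= m)%nat -> ex_hess m (fun y => y l ^ a).
Proof.
  intros Hl. induction a as [|a IH]; simpl.
  - apply ex_hess_const.
  - apply ex_hess_mult; [apply ex_hess_coord, Hl|exact IH].
Qed.

Lemma ex_hess_prodR_pow (m n : nat) (alpha : nat -> nat) : (n <= S m)%nat ->
  ex_hess m (fun y => prodR n (fun i => y i ^ alpha i)).
Proof.
  induction n as [|n IH]; intros Hn; simpl.
  - apply ex_hess_const.
  - apply ex_hess_mult; [apply IH|apply ex_hess_coord_pow]; lia.
Qed.

Lemma ex_hess_form (m k : nat) (f : (nat -> R) -> R) : is_form m k f -> ex_hess m f.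
Proof.
  intros (l & _ & E). eapply ex_hess_ext; [intros y; symmetry; apply E|].
  clear E. induction l as [|p l IH]; simpl.
  - apply ex_hess_const.
  - apply ex_hess_plus; [apply ex_hess_mult|exact IH].
    + apply ex_hess_const.
    + apply ex_hess_prodR_pow. lia.
Qed.

Lemma prodR_pow_scal (n : nat) (alpha : nat -> nat) (lam : R) (y : nat -> R) :
  prodR n (fun i => (lam * y i) ^ alpha i) = lam ^ sumN n alpha * prodR n (fun i => y i ^ alpha i).
Proof.
  induction n as [|n IH]; simpl; [ring|]. rewrite IH, Rpow_mult_distr, pow_add. ring.
Qed.

Lemma is_form_homog (m k : nat) (f : (nat -> R) -> R) : is_form m k f ->
  forall lam y, f (fun l => lam * y l) = lam ^ k * f y.
Proof.
  intros (l & Hdeg & E) lam y. rewrite !E. clear E.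
  induction l as [|p l IH]; simpl; [ring|].
  apply List.Forall_cons_iff in Hdeg as [Hp Hl].
  rewrite IH by exact Hl. unfold monomial. rewrite prodR_pow_scal, Hp. ring.
Qed.

Lemma is_form_ext (m k : nat) (f f' : (nat -> R) -> R) :
  (forall y, f y = f' y) -> is_form m k f -> is_form m k f'.
Proof. intros E (l & A & B). exists l. split; [exact A|]. intros y. rewrite <- E. apply B. Qed.

(** * Second-order jets at 0 *)

Definition is_jet2 (phi : R -> R) (d1 d2 : R) : Prop :=
  exists dphi : R -> R,
    (forall t, is_derive phi t (dphi t)) /\ dphi 0 = d1 /\ is_derive dphi 0 d2.

Lemma is_jet2_Derive (phi : R -> R) (d1 d2 : R) :
  is_jet2 phi d1 d2 -> Derive phi 0 = d1 /\ Derive_n phi 2 0 = d2.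
Proof.
  intros (dphi & Hd & H0 & H2). split.
  - rewrite <- H0. apply is_derive_unique, Hd.
  - simpl. rewrite (Derive_ext _ dphi) by (intros; apply is_derive_unique, Hd).
    apply is_derive_unique, H2.
Qed.

Lemma is_jet2_unique (phi psi : R -> R) (a b c d : R) :
  is_jet2 phi a b -> is_jet2 psi c d -> (forall t, phi t = psi t) -> a = c /\ b = d.
Proof.
  intros H1 H2 E.
  destruct (is_jet2_Derive _ _ _ H1) as [<- <-], (is_jet2_Derive _ _ _ H2) as [<- <-].
  split; [apply Derive_ext, E|].
  simpl. apply Derive_ext. intros. apply Derive_ext, E.
Qed.


Lemma is_jet2_const (a : R) : is_jet2 (fun _ => a) 0 0.
Proof.
  exists (fun _ => 0).
  split; [|split]; [intros; apply is_derive_Rconst|reflexivity|apply is_derive_Rconst].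
Qed.

Lemma is_jet2_affine (a b : R) : is_jet2 (fun t => a + t * b) b 0.
Proof.
  exists (fun _ => b). split; [|split]; [|reflexivity|apply is_derive_Rconst].
  intros t. auto_derive; [exact I|ring].
Qed.

Lemma is_jet2_plus (phi psi : R -> R) (a b c d : R) :
  is_jet2 phi a b -> is_jet2 psi c d -> is_jet2 (fun t => phi t + psi t) (a + c) (b + d).
Proof.
  intros (dphi & A & B & C) (dpsi & A' & B' & C').
  exists (fun t => dphi t + dpsi t). split; [|split].
  - intros. apply is_derive_Rplus; auto.
  - cbv beta. rewrite B, B'. reflexivity.
  - apply is_derive_Rplus; auto.
Qed.

Lemma is_jet2_mult (phi psi : R -> R) (a b c d : R) :
  is_jet2 phi a b -> is_jet2 psi c d ->
  is_jet2 (fun t => phi t * psi t) (a * psi 0 + phi 0 * c) (b * psi 0 + 2 * a * c + phi 0 * d).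
Proof.
  intros (dphi & A & B & C) (dpsi & A' & B' & C').
  exists (fun t => dphi t * psi t + phi t * dpsi t). split; [|split].
  - intros. apply is_derive_Rmult; auto.
  - cbv beta. rewrite B, B'. reflexivity.
  - eapply is_derive_eq.
    + apply is_derive_Rplus; apply is_derive_Rmult; [apply C|apply A'|apply A|apply C'].
    + rewrite B, B'. ring.
Qed.

Lemma is_jet2_sumR (n : nat) (phi : nat -> R -> R) (a b : nat -> R) :
  (forall j, (j < n)%nat -> is_jet2 (phi j) (a j) (b j)) ->
  is_jet2 (fun t => sumR n (fun j => phi j t)) (sumR n a) (sumR n b).
Proof.
  induction n as [|n IH]; intros H; simpl.
  - apply is_jet2_const.
  - apply (is_jet2_plus (fun t => sumR n (fun j => phi j t)) (phi n));
      [apply IH; intros|]; apply H; lia.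
Qed.

Lemma is_jet2_pow (phi : R -> R) (a b : R) (k : nat) : is_jet2 phi a b -> phi 0 = 1 ->
  is_jet2 (fun t => phi t ^ k) (INR k * a) (INR k * b + INR k * (INR k - 1) * a ^ 2).
Proof.
  intros H H0. induction k as [|k IH].
  - simpl. replace (0 * a) with 0 by ring.
    replace (0 * b + 0 * (0 - 1) * (a * (a * 1))) with 0 by ring. apply is_jet2_const.
  - pose proof (is_jet2_mult _ _ _ _ _ _ H IH) as M. simpl in M. rewrite H0, pow1 in M.
    rewrite S_INR. replace ((INR k + 1) * a) with (a * 1 + 1 * (INR k * a)) by ring.
    replace ((INR k + 1) * b + (INR k + 1) * (INR k + 1 - 1) * a ^ 2)
      with (b * 1 + 2 * a * (INR k * a) + 1 * (INR k * b + INR k * (INR k - 1) * a ^ 2)) by ring.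
    exact M.
Qed.

Lemma is_jet2_comp (m : nat) (f : (nat -> R) -> R)
  (g : nat -> (nat -> R) -> R) (H : nat -> nat -> (nat -> R) -> R) (c dc ddc : R -> nat -> R) :
  has_hess m f g H ->
  (forall t l, (l <= m)%nat -> is_derive (fun s => c s l) t (dc t l)) ->
  (forall t l, (l <= m)%nat -> is_derive (fun s => dc s l) t (ddc t l)) ->
  is_jet2 (fun t => f (c t))
    (sumR (S m) (fun i => g i (c 0) * dc 0 i))
    (sumR (S m) (fun i => sumR (S m) (fun j => H i j (c 0) * dc 0 j) * dc 0 i
                          + g i (c 0) * ddc 0 i)).
Proof.
  intros [Hg HH] Hc Hdc.
  exists (fun t => sumR (S m) (fun i => g i (c t) * dc t i)). split; [|split].
  - intros t. apply Hg. intros; apply Hc; auto.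
  - reflexivity.
  - apply (is_derive_sumR (S m) (fun i t => g i (c t) * dc t i)). intros i Hi.
    apply (is_derive_Rmult (fun t => g i (c t)) (fun t => dc t i)).
    + apply HH. intros; apply Hc; auto.
    + apply Hdc. lia.
Qed.

(** * Forms along lines and great circles *)

Lemma line_at_0 (x v : nat -> R) : (fun l => x l + 0 * v l) = x.
Proof. apply functional_extensionality. intros. ring. Qed.

Lemma geod_at_0 (x v : nat -> R) : geod x v 0 = x.
Proof. apply functional_extensionality. intros. unfold geod. rewrite cos_0, sin_0. ring. Qed.

Lemma is_jet2_line (m : nat) (f : (nat -> R) -> R)
  (g : nat -> (nat -> R) -> R) (H : nat -> nat -> (nat -> R) -> R) (x v : nat -> R) :
  has_hess m f g H ->
  is_jet2 (fun t => f (fun l => x l + t * v l))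
    (sumR (S m) (fun i => g i x * v i))
    (sumR (S m) (fun i => sumR (S m) (fun j => H i j x * v j) * v i)).
Proof.
  intros Hf.
  pose proof (is_jet2_comp m f g H (fun t l => x l + t * v l) (fun _ => v) (fun _ _ => 0) Hf)
    as J.
  cbv beta in J. rewrite line_at_0 in J.
  replace (sumR (S m) (fun i => sumR (S m) (fun j => H i j x * v j) * v i))
    with (sumR (S m) (fun i => sumR (S m) (fun j => H i j x * v j) * v i + g i x * 0))
    by (apply sumR_ext; intros; ring).
  apply J; intros; [auto_derive; [exact I|ring]|apply is_derive_Rconst].
Qed.

Lemma is_jet2_coord_line (m i : nat) (f : (nat -> R) -> R)
  (g : nat -> (nat -> R) -> R) (H : nat -> nat -> (nat -> R) -> R) (x : nat -> R) :
  has_hess m f g H -> (i <= m)%nat ->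
  is_jet2 (fun t => f (fun l => x l + t * std_basis i l)) (g i x) (H i i x).
Proof.
  intros Hf Hi. pose proof (is_jet2_line m f g H x (std_basis i) Hf) as J.
  rewrite sumR_std_basis in J by lia.
  rewrite (sumR_ext (S m) _ (fun i' => H i' i x * std_basis i i')), sumR_std_basis in J
    by (try lia; intros; rewrite sumR_std_basis by lia; reflexivity).
  exact J.
Qed.

Lemma ex_hess_coord_line_jet (m i : nat) (f : (nat -> R) -> R) (x : nat -> R) :
  ex_hess m f -> (i <= m)%nat ->
  is_jet2 (fun t => f (fun l => x l + t * std_basis i l))
    (Derive (fun t => f (fun l => x l + t * std_basis i l)) 0)
    (Derive_n (fun t => f (fun l => x l + t * std_basis i l)) 2 0).
Proof.
  intros (g & H & Hf) Hi. pose proof (is_jet2_coord_line m i f g H x Hf Hi) as J.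
  destruct (is_jet2_Derive _ _ _ J) as [-> ->]. exact J.
Qed.

(* Euler's relations, read off from the jet of [t |-> f ((1 + t) x) = (1 + t)^k f x]. *)
Lemma form_euler (m k : nat) (f : (nat -> R) -> R)
  (g : nat -> (nat -> R) -> R) (H : nat -> nat -> (nat -> R) -> R) (x : nat -> R) :
  is_form m k f -> has_hess m f g H ->
  sumR (S m) (fun i => g i x * x i) = INR k * f x /\
  sumR (S m) (fun i => sumR (S m) (fun j => H i j x * x j) * x i) = INR k * (INR k - 1) * f x.
Proof.
  intros Hk Hf.
  pose proof (is_jet2_mult _ _ _ _ _ _
    (is_jet2_pow _ _ _ k (is_jet2_affine 1 1) ltac:(cbv beta; ring)) (is_jet2_const (f x))) as J.
  cbv beta in J. replace (1 + 0 * 1) with 1 in J by ring. rewrite pow1 in J.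
  destruct (is_jet2_unique _ _ _ _ _ _ (is_jet2_line m f g H x x Hf) J) as [E1 E2].
  { intros t. rewrite <- (is_form_homog m k f Hk). f_equal.
    apply functional_extensionality. intros. ring. }
  rewrite E1, E2. split; ring.
Qed.

Lemma Derive2_geod (m : nat) (f : (nat -> R) -> R)
  (g : nat -> (nat -> R) -> R) (H : nat -> nat -> (nat -> R) -> R) (x v : nat -> R) :
  has_hess m f g H ->
  Derive_n (fun t => f (geod x v t)) 2 0 =
  sumR (S m) (fun i => sumR (S m) (fun j => H i j x * v j) * v i)
  - sumR (S m) (fun i => g i x * x i).
Proof.
  intros Hf.
  assert (Hc : forall t l, (l <= m)%nat ->
    is_derive (fun s => geod x v s l) t (- sin t * x l + cos t * v l))
    by (intros; unfold geod; auto_derive; [exact I|ring]).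
  assert (Hdc : forall t l, (l <= m)%nat ->
    is_derive (fun s => - sin s * x l + cos s * v l) t (- cos t * x l - sin t * v l))
    by (intros; auto_derive; [exact I|ring]).
  pose proof (is_jet2_comp m f g H (geod x v) _ _ Hf Hc Hdc) as J.
  rewrite (proj2 (is_jet2_Derive _ _ _ J)), geod_at_0, cos_0, sin_0.
  unfold Rminus. rewrite <- sumR_opp, <- sumR_plus.
  apply sumR_ext. intros i _.
  rewrite (sumR_ext _ _ (fun j => H i j x * v j)) by (intros; ring). ring.
Qed.

(* x completes the frame e to an orthonormal basis of R^{m+1}. *)
Definition resolves_identity (m : nat) (x : nat -> R) (e : nat -> nat -> R) : Prop :=
  forall i j, (i <= m)%nat -> (j <= m)%nat ->
    sumR m (fun a => e a i * e a j) + x i * x j = if Nat.eqb i j then 1 else 0.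

Lemma trace_resolves_identity (m : nat) (x : nat -> R) (e : nat -> nat -> R)
  (h : nat -> nat -> R) :
  resolves_identity m x e ->
  sumR m (fun a => sumR (S m) (fun i => sumR (S m) (fun j => h i j * e a j) * e a i))
  + sumR (S m) (fun i => sumR (S m) (fun j => h i j * x j) * x i)
  = sumR (S m) (fun i => h i i).
Proof.
  intros Hx.
  transitivity (sumR (S m) (fun i => sumR (S m) (fun j =>
    h i j * (sumR m (fun a => e a i * e a j) + x i * x j)))).
  - rewrite sumR_swap, <- sumR_plus. apply sumR_ext. intros i _.
    rewrite (sumR_ext m _ (fun a => sumR (S m) (fun j => h i j * e a j * e a i)))
      by (intros; rewrite <- sumR_scal_r; reflexivity).
    rewrite sumR_swap, <- sumR_scal_r, <- sumR_plus. apply sumR_ext. intros j _.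
    rewrite (sumR_ext m _ (fun a => h i j * (e a i * e a j))) by (intros; ring).
    rewrite sumR_scal_l. ring.
  - apply sumR_ext. intros i Hi. rewrite (sumR_single (S m) i); [|lia|].
    + rewrite Hx, Nat.eqb_refl by lia. ring.
    + intros j Hj Hji. rewrite Hx, (proj2 (Nat.eqb_neq i j)) by lia. ring.
Qed.

(* The eigenvalue of the Laplacian of S^m on spherical harmonics of degree k. *)
Definition sph_eigenvalue (m k : nat) : R := INR k * (INR k + INR m - 1).

Lemma sumR_Derive2_geod_form (m k : nat) (f : (nat -> R) -> R) (x : nat -> R)
  (e : nat -> nat -> R) :
  is_form m k f -> resolves_identity m x e ->
  sumR m (fun a => Derive_n (fun t => f (geod x (e a) t)) 2 0)
  = sumR (S m) (fun i => Derive_n (fun t => f (fun l => x l + t * std_basis i l)) 2 0)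
    - sph_eigenvalue m k * f x.
Proof.
  intros Hk Hx. destruct (ex_hess_form m k f Hk) as (g & H & Hf).
  destruct (form_euler m k f g H x Hk Hf) as [E1 E2].
  rewrite (sumR_ext m _ _ (fun a _ => Derive2_geod m f g H x (e a) Hf)).
  rewrite (sumR_ext (S m)
    (fun i => Derive_n (fun t => f (fun l => x l + t * std_basis i l)) 2 0) (fun i => H i i x))
    by (intros i Hi; apply (is_jet2_Derive _ _ _ (is_jet2_coord_line m i f g H x Hf ltac:(lia)))).
  rewrite <- (trace_resolves_identity m x e (fun i j => H i j x) Hx), E2.
  unfold Rminus. rewrite sumR_plus, sumR_const, E1. unfold sph_eigenvalue. ring.
Qed.

(** * The normal component: differentiating the norm identity *)

Lemma is_jet2_nsq_coord_line (m i : nat) (x : nat -> R) : (i <= m)%nat ->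
  is_jet2 (fun t => nsq m (fun l => x l + t * std_basis i l)) (2 * x i) 2.
Proof.
  intros Hi.
  pose proof (is_jet2_sumR (S m)
    (fun l t => (x l + t * std_basis i l) * (x l + t * std_basis i l)) _ _
    (fun l _ => is_jet2_mult _ _ _ _ _ _
       (is_jet2_affine (x l) (std_basis i l)) (is_jet2_affine (x l) (std_basis i l)))) as J.
  cbv beta in J.
  rewrite (sumR_ext (S m) _ (fun l => 2 * x l * std_basis i l)), sumR_std_basis in J
    by (lia || (intros; ring)).
  rewrite (sumR_ext (S m) _ (fun l => 2 * std_basis i l * std_basis i l)), sumR_std_basis in J
    by (lia || (intros; ring)).
  rewrite std_basis_diag, Rmult_1_r in J. exact J.
Qed.

Lemma nsq_map_Derive2_coord_line (m N i : nat) (F : (nat -> R) -> nat -> R) (x : nat -> R)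
  (r1 r2 : R) (k1 k2 : nat) :
  (forall j, (j <= N)%nat -> ex_hess m (fun y => F y j)) ->
  (forall y, nsq N (F y) = r1 ^ 2 * nsq m y ^ k1 + r2 ^ 2 * nsq m y ^ k2) ->
  nsq m x = 1 -> (i <= m)%nat ->
  sumR (S N) (fun j => partial F i j x ^ 2
    + F x j * Derive_n (fun t => F (fun l => x l + t * std_basis i l) j) 2 0)
  = r1 ^ 2 * INR k1 * (1 + 2 * (INR k1 - 1) * x i ^ 2)
    + r2 ^ 2 * INR k2 * (1 + 2 * (INR k2 - 1) * x i ^ 2).
Proof.
  intros HF Hn Hx Hi.
  pose proof (is_jet2_sumR (S N)
    (fun j t => F (fun l => x l + t * std_basis i l) j * F (fun l => x l + t * std_basis i l) j)
    _ _ (fun j Hj => is_jet2_mult _ _ _ _ _ _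
          (ex_hess_coord_line_jet m i _ x (HF j ltac:(lia)) Hi)
          (ex_hess_coord_line_jet m i _ x (HF j ltac:(lia)) Hi))) as JL.
  assert (Hx0 : (fun t => nsq m (fun l => x l + t * std_basis i l)) 0 = 1)
    by (cbv beta; rewrite line_at_0; exact Hx).
  pose proof (is_jet2_nsq_coord_line m i x Hi) as Jsq.
  pose proof (is_jet2_plus _ _ _ _ _ _
    (is_jet2_mult _ _ _ _ _ _ (is_jet2_const (r1 ^ 2)) (is_jet2_pow _ _ _ k1 Jsq Hx0))
    (is_jet2_mult _ _ _ _ _ _ (is_jet2_const (r2 ^ 2)) (is_jet2_pow _ _ _ k2 Jsq Hx0))) as JR.
  destruct (is_jet2_unique _ _ _ _ _ _ JL JR) as [_ E]; [intros t; apply Hn|].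
  cbv beta in E. rewrite line_at_0 in E.
  rewrite (sumR_ext (S N) _ (fun j =>
    / 2 * (Derive_n (fun t => F (fun l => x l + t * std_basis i l) j) 2 0 * F x j
           + 2 * partial F i j x * partial F i j x
           + F x j * Derive_n (fun t => F (fun l => x l + t * std_basis i l) j) 2 0)))
    by (intros; unfold partial; field).
  rewrite sumR_scal_l. unfold partial. rewrite E. field.
Qed.

Lemma dotR_lap0_of_nsq_map (m N : nat) (F : (nat -> R) -> nat -> R) (x : nat -> R)
  (r1 r2 : R) (k1 k2 : nat) :
  (forall j, (j <= N)%nat -> ex_hess m (fun y => F y j)) ->
  (forall y, nsq N (F y) = r1 ^ 2 * nsq m y ^ k1 + r2 ^ 2 * nsq m y ^ k2) ->
  nsq m x = 1 ->
  dotR N (F x) (lap0 m F x) =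
  d0sq m N F x - (r1 ^ 2 * INR k1 * (2 * INR k1 + INR m - 1)
                  + r2 ^ 2 * INR k2 * (2 * INR k2 + INR m - 1)).
Proof.
  intros HF Hn Hx.
  pose proof (sumR_ext (S m) _ _
    (fun i Hi => nsq_map_Derive2_coord_line m N i F x r1 r2 k1 k2 HF Hn Hx ltac:(lia))) as E.
  rewrite (sumR_ext (S m) _ (fun i => sumR (S N) (fun j => partial F i j x ^ 2)
      + sumR (S N) (fun j =>
          F x j * Derive_n (fun t => F (fun l => x l + t * std_basis i l) j) 2 0)))
    in E by (intros; apply sumR_plus).
  rewrite sumR_plus, (sumR_swap (S m) (S N)
    (fun i j => F x j * Derive_n (fun t => F (fun l => x l + t * std_basis i l) j) 2 0)) in E.
  rewrite (sumR_ext (S N) _ (fun j => - (F x j * lap0 m F x j))), sumR_opp in E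
    by (intros; cbv beta; unfold lap0; rewrite sumR_scal_l; ring).
  rewrite (sumR_ext (S m) (fun i => r1 ^ 2 * INR k1 * (1 + 2 * (INR k1 - 1) * x i ^ 2)
                                    + r2 ^ 2 * INR k2 * (1 + 2 * (INR k2 - 1) * x i ^ 2))
    (fun i => (r1 ^ 2 * INR k1 + r2 ^ 2 * INR k2)
      + 2 * (r1 ^ 2 * INR k1 * (INR k1 - 1) + r2 ^ 2 * INR k2 * (INR k2 - 1)) * (x i * x i)))
    in E by (intros; ring).
  rewrite sumR_plus, sumR_const, sumR_scal_l in E.
  unfold nsq, dotR in Hx. rewrite Hx, S_INR in E.
  unfold d0sq, dotR. lra.
Qed.

(** * Orthonormal frames *)

Module OrthogonalMatrix.
Import all_boot all_algebra Rstruct GRing.Theory.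

Lemma sumR_big (n : nat) (f : nat -> R) : sumR n f = (\sum_(i < n) f i)%R.
Proof. elim: n => [|n IH]; first by rewrite big_ord0. by rewrite big_ord_recr /= IH. Qed.

Lemma eqb_eqn (a b : nat) : Nat.eqb a b = (a == b).
Proof. by case: (Nat.eqb_spec a b) => [->|/eqP/negbTE ->]; rewrite ?eqxx. Qed.

Lemma orthonormal_cols (n : nat) (v : nat -> nat -> R) :
  (forall r s, (r < n)%coq_nat -> (s < n)%coq_nat ->
     sumR n (fun i => v r i * v s i) = if Nat.eqb r s then 1 else 0) ->
  forall i j, (i < n)%coq_nat -> (j < n)%coq_nat ->
     sumR n (fun r => v r i * v r j) = if Nat.eqb i j then 1 else 0.
Proof.
move=> Hrows i j /ltP hi /ltP hj.
pose U := ((\matrix_(r < n, k < n) v r k)%R : 'M[R]_n).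
have UUt : (U *m U^T = 1%:M)%R.
  apply/matrixP => r s; rewrite !mxE.
  under eq_bigr do rewrite !mxE.
  rewrite (_ : (\sum_(k < n) v r k * v s k)%R = sumR n (fun k => v r k * v s k));
    last by rewrite sumR_big.
  rewrite Hrows ?eqb_eqn; try exact/ltP.
  change (nat_of_ord r == nat_of_ord s) with (r == s).
  by case: (r == s); rewrite ?mulr1n ?mulr0n.
transitivity ((U^T *m U)%R (Ordinal hi) (Ordinal hj)).
  by rewrite !mxE sumR_big; apply: eq_bigr => k _; rewrite !mxE.
rewrite (mulmx1C UUt) mxE eqb_eqn.
change (Ordinal hi == Ordinal hj) with (i == j).
by case: (i == j); rewrite ?mulr1n ?mulr0n.
Qed.

End OrthogonalMatrix.

Lemma tangent_frame_resolves_identity (m : nat) (x : nat -> R) (e : nat -> nat -> R) :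
  nsq m x = 1 -> tangent_frame m x e -> resolves_identity m x e.
Proof.
  intros Hx [Horth Hnorm] i j Hi Hj.
  set (v := fun r => if Nat.ltb r m then e r else x).
  assert (Hrows : forall r s, (r < S m)%nat -> (s < S m)%nat ->
    sumR (S m) (fun l => v r l * v s l) = if Nat.eqb r s then 1 else 0).
  { intros r s Hr Hs. unfold v.
    destruct (Nat.ltb_spec r m), (Nat.ltb_spec s m).
    - apply Hnorm; assumption.
    - replace s with m by lia. rewrite (proj2 (Nat.eqb_neq r m)) by lia. apply Horth; assumption.
    - replace r with m by lia. rewrite (proj2 (Nat.eqb_neq m s)) by lia.
      rewrite <- (Horth s) by assumption. apply sumR_ext. intros. ring.
    - replace r with m by lia. replace s with m by lia. rewrite Nat.eqb_refl. exact Hx. }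
  pose proof (OrthogonalMatrix.orthonormal_cols (S m) v Hrows i j ltac:(lia) ltac:(lia)) as E.
  simpl in E. unfold v in E. rewrite Nat.ltb_irrefl in E. rewrite <- E. f_equal.
  apply sumR_ext. intros a Ha. rewrite (proj2 (Nat.ltb_lt a m) Ha). reflexivity.
Qed.

(** * The tension field *)

Lemma tension_of_forms (m N : nat) (F : (nat -> R) -> nat -> R) (deg : nat -> nat)
  (x : nat -> R) (e : nat -> nat -> R) :
  (forall j, (j <= N)%nat -> is_form m (deg j) (fun y => F y j)) ->
  resolves_identity m x e -> nsq N (F x) = 1 ->
  forall j, (j <= N)%nat ->
  tension m N F x e j =
  - lap0 m F x j - sph_eigenvalue m (deg j) * F x j
  + (dotR N (F x) (lap0 m F x)
     + sumR (S N) (fun l => sph_eigenvalue m (deg l) * (F x l * F x l))) * F x j.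
Proof.
  intros Hforms Hx HFx.
  assert (Hacc : forall j, (j <= N)%nat ->
    sumR m (fun a => Derive_n (fun t => F (geod x (e a) t) j) 2 0)
    = - lap0 m F x j - sph_eigenvalue m (deg j) * F x j).
  { intros j Hj.
    rewrite (sumR_Derive2_geod_form m (deg j) (fun y => F y j) x e (Hforms j Hj) Hx).
    unfold lap0. ring. }
  intros j Hj. unfold tension. cbv zeta beta. rewrite HFx, Hacc by exact Hj.
  unfold dotR at 1.
  rewrite (sumR_ext (S N) _ (fun l => - (F x l * lap0 m F x l)
                                      + - (sph_eigenvalue m (deg l) * (F x l * F x l))))
    by (intros; rewrite Hacc by lia; ring).
  rewrite sumR_plus, !sumR_opp. unfold dotR. field.
Qed.

Lemma concat_map_l (n1 : nat) (F1 F2 : (nat -> R) -> nat -> R) (y : nat -> R) (j : nat) :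
  (j <= n1)%nat -> concat_map n1 F1 F2 y j = F1 y j.
Proof. intros Hj. unfold concat_map. rewrite (proj2 (Nat.leb_le j n1) Hj). reflexivity. Qed.

Lemma concat_map_r (n1 : nat) (F1 F2 : (nat -> R) -> nat -> R) (y : nat -> R) (j : nat) :
  concat_map n1 F1 F2 y (S n1 + j) = F2 y j.
Proof.
  unfold concat_map. rewrite (proj2 (Nat.leb_gt (S n1 + j) n1)) by lia. f_equal. lia.
Qed.

Lemma is_form_concat_map (m k1 k2 n1 n2 : nat) (F1 F2 : (nat -> R) -> nat -> R) :
  (forall j, (j <= n1)%nat -> is_form m k1 (fun y => F1 y j)) ->
  (forall j, (j <= n2)%nat -> is_form m k2 (fun y => F2 y j)) ->
  forall j, (j <= n1 + n2 + 1)%nat ->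
  is_form m (if (j <=? n1)%nat then k1 else k2) (fun y => concat_map n1 F1 F2 y j).
Proof.
  intros H1 H2 j Hj. destruct (Nat.leb_spec j n1) as [Hle|Hgt].
  - apply (is_form_ext m k1 (fun y => F1 y j)); [|apply H1, Hle].
    intros y. symmetry. apply concat_map_l, Hle.
  - replace j with (S n1 + (j - S n1))%nat by lia.
    apply (is_form_ext m k2 (fun y => F2 y (j - S n1)%nat)); [|apply H2; lia].
    intros y. symmetry. apply concat_map_r.
Qed.

Lemma sumR_concat_map (n1 n2 : nat) (F1 F2 : (nat -> R) -> nat -> R) (y : nat -> R)
  (h : nat -> R -> R) :
  sumR (S (n1 + n2 + 1)) (fun l => h l (concat_map n1 F1 F2 y l)) =
  sumR (S n1) (fun l => h l (F1 y l)) + sumR (S n2) (fun l => h (S n1 + l)%nat (F2 y l)).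
Proof.
  replace (S (n1 + n2 + 1)) with (S n1 + S n2)%nat by lia.
  rewrite sumR_add_range. f_equal.
  - apply sumR_ext. intros l Hl. rewrite concat_map_l by lia. reflexivity.
  - apply sumR_ext. intros l _. rewrite concat_map_r. reflexivity.
Qed.

Lemma nsq_concat_map (n1 n2 : nat) (F1 F2 : (nat -> R) -> nat -> R) (y : nat -> R) :
  nsq (n1 + n2 + 1) (concat_map n1 F1 F2 y) = nsq n1 (F1 y) + nsq n2 (F2 y).
Proof. exact (sumR_concat_map n1 n2 F1 F2 y (fun _ v => v * v)). Qed.

Lemma sumR_concat_map_weighted (n1 n2 : nat) (F1 F2 : (nat -> R) -> nat -> R)
  (y : nat -> R) (w : nat -> R) (c1 c2 : R) :
  (forall l, (l <= n1)%nat -> w l = c1) -> (forall l, w (S n1 + l)%nat = c2) ->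
  sumR (S (n1 + n2 + 1))
    (fun l => w l * (concat_map n1 F1 F2 y l * concat_map n1 F1 F2 y l))
  = c1 * nsq n1 (F1 y) + c2 * nsq n2 (F2 y).
Proof.
  intros H1 H2.
  rewrite (sumR_concat_map n1 n2 F1 F2 y (fun l v => w l * (v * v))).
  unfold nsq, dotR. rewrite <- !sumR_scal_l. f_equal.
  - apply sumR_ext. intros l Hl. rewrite H1 by lia. reflexivity.
  - apply sumR_ext. intros l _. rewrite H2. reflexivity.
Qed.

Theorem mainTheorem3 (m k1 k2 n1 n2 : nat) (r1 r2 : R)
  (F1 F2 : (nat -> R) -> nat -> R) :
  (1 <= m)%nat ->
  0 < r1 -> 0 < r2 -> r1 ^ 2 + r2 ^ 2 = 1 ->
  (forall j, (j <= n1)%nat -> is_form m k1 (fun x => F1 x j)) ->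
  (forall j, (j <= n2)%nat -> is_form m k2 (fun x => F2 x j)) ->
  (forall x, nsq n1 (F1 x) = r1 ^ 2 * (nsq m x) ^ k1) ->
  (forall x, nsq n2 (F2 x) = r2 ^ 2 * (nsq m x) ^ k2) ->
  let F := concat_map n1 F1 F2 in
  let N := (n1 + n2 + 1)%nat in
  forall (x : nat -> R) (e : nat -> nat -> R),
    nsq m x = 1 -> tangent_frame m x e ->
    (forall j, (j <= n1)%nat ->
       tension m N F x e j =
       - lap0 m F x j
       + (d0sq m N F x - INR k1 ^ 2 * r1 ^ 2 - INR k2 ^ 2 * r2 ^ 2
          + INR k1 * (1 - INR m - INR k1)) * F1 x j) /\
    (forall j, (j <= n2)%nat ->
       tension m N F x e (S n1 + j)%nat =
       - lap0 m F x (S n1 + j)%nat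
       + (d0sq m N F x - INR k1 ^ 2 * r1 ^ 2 - INR k2 ^ 2 * r2 ^ 2
          + INR k2 * (1 - INR m - INR k2)) * F2 x j).
Proof.
  intros _ _ _ Hr HF1 HF2 Hn1 Hn2 F N x e Hx Hframe.
  set (deg := fun j => if (j <=? n1)%nat then k1 else k2).
  assert (deg_l : forall l, (l <= n1)%nat -> deg l = k1)
    by (intros l Hl; unfold deg; rewrite (proj2 (Nat.leb_le l n1) Hl); reflexivity).
  assert (deg_r : forall l, deg (S n1 + l)%nat = k2)
    by (intros l; unfold deg; rewrite (proj2 (Nat.leb_gt (S n1 + l) n1)) by lia; reflexivity).
  pose proof (is_form_concat_map m k1 k2 n1 n2 F1 F2 HF1 HF2) as Hforms.
  assert (Hnorm : forall y, nsq N (F y) = r1 ^ 2 * nsq m y ^ k1 + r2 ^ 2 * nsq m y ^ k2)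
    by (intros y; rewrite <- Hn1, <- Hn2; apply nsq_concat_map).
  assert (HFx : nsq N (F x) = 1) by (rewrite Hnorm, Hx, !pow1; lra).
  pose proof (sumR_concat_map_weighted n1 n2 F1 F2 x (fun l => sph_eigenvalue m (deg l))
    (sph_eigenvalue m k1) (sph_eigenvalue m k2)
    (fun l Hl => f_equal (sph_eigenvalue m) (deg_l l Hl))
    (fun l => f_equal (sph_eigenvalue m) (deg_r l))) as Hweights.
  rewrite Hn1, Hn2, Hx, !pow1 in Hweights.
  pose proof (tension_of_forms m N F deg x e Hforms
    (tangent_frame_resolves_identity m x e Hx Hframe) HFx) as Htension.
  rewrite (dotR_lap0_of_nsq_map m N F x r1 r2 k1 k2
    (fun j Hj => ex_hess_form m _ _ (Hforms j Hj)) Hnorm Hx) in Htension.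
  unfold F, N in *. rewrite Hweights in Htension.
  split; intros j Hj; rewrite Htension by lia.
  - rewrite deg_l, concat_map_l by lia. unfold sph_eigenvalue. ring.
  - rewrite deg_r, concat_map_r. unfold sph_eigenvalue. ring.
Qed.
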